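(* Consider a mutation operator on $\{0,1\}^n$ that is either standard bit mutation with mutation probability $p$ satisfying $p=O(1/n)$ and $p\ge n^{-O(1)}$, or the heavy-tailed mutation operator with a constant $\beta>1$, and any fitness function $f$. Then there is a constant $\gamma>1$ such that $p_x^-\le\gamma^{-1}$ for all non-optimal search points $x$. In addition, $p_x^+\ge n^{-O(n)}$ for all non-optimal search points $x$.
   Context: Standard bit mutation with probability $p$ flips each bit independently with probability $p$. Heavy-tailed mutation with $\beta>1$ draws $\chi\in\{1,\dots,n/2\}$ with $\Pr[\chi=i]=i^{-\beta}/\sum_{j=1}^{n/2}j^{-\beta}$ and then performs standard bit mutation with probability $\chi/n$. For a search point $x$, $p_x^+$ (resp. $p_x^-$) is the probability that one application of the mutation operator to $x$ produces a search point of strictly larger (resp. strictly smaller) fitness than $x$. A search point is optimal if it maximises $f$. Asymptotics are with respect to $n\to\infty$. *)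

From HB Require Import structures.
From mathcomp Require Import all_boot all_order all_algebra.
From mathcomp Require Import all_classical all_reals all_analysis.
Set Implicit Arguments. Unset Strict Implicit. Unset Printing Implicit Defensive.
Import Order.TTheory GRing.Theory Num.Theory.
Local Open Scope ring_scope.

Definition bits (n : nat) := {ffun 'I_n -> bool}.

Section Mutation.
Variable R : realType.

Definition sbm (p : R) (n : nat) (x y : bits n) : R :=
  \prod_(i < n) (if x i != y i then p else 1 - p).

Definition ht_norm (beta : R) (n : nat) : R :=
  \sum_(1 <= j < (n./2).+1) (j%:R `^ (- beta)).

Definition ht_weight (beta : R) (n i : nat) : R :=
  (i%:R `^ (- beta)) / ht_norm beta n.

Definition heavy (beta : R) (n : nat) (x y : bits n) : R :=
  \sum_(1 <= i < (n./2).+1) ht_weight beta n i * sbm (i%:R / n%:R) x y.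

Definition p_plus (n : nat) (op : bits n -> bits n -> R) (f : bits n -> R) (x : bits n) : R :=
  \sum_(y : bits n | f x < f y) op x y.
Definition p_minus (n : nat) (op : bits n -> bits n -> R) (f : bits n -> R) (x : bits n) : R :=
  \sum_(y : bits n | f y < f x) op x y.

Definition optimal (n : nat) (f : bits n -> R) (x : bits n) : Prop :=
  forall y : bits n, f y <= f x.
End Mutation.

From HB Require Import structures.
From mathcomp Require Import all_boot all_order all_algebra.
From mathcomp Require Import all_classical all_reals all_analysis.
From mathcomp Require Import lra ring zify.
Set Implicit Arguments. Unset Strict Implicit. Unset Printing Implicit Defensive.
Import Order.TTheory GRing.Theory Num.Theory.
Local Open Scope ring_scope.

(* A non-optimal x has a strictly better y, so p_x^+ >= Pr[x -> y] and
   p_x^- <= 1 - Pr[x -> x]; it suffices to bound the probability of staying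
   put from below by a constant and every transition probability by n^-(Cn).
   For standard bit mutation Pr[x -> x] = (1-p)^n >= e^(-2pn) with pn = O(1),
   and every transition has probability at least min(p, 1-p)^n.  Heavy-tailed
   mutation picks chi = 1 with probability 1 / sum_j j^-beta >= 1 - 2^(1-beta)
   (group the j into dyadic blocks to compare with a geometric series), so it
   inherits both bounds from standard bit mutation with rate 1/n. *)

Section Kernel.
Variables (R : realType) (n : nat) (op : bits n -> bits n -> R).
Variables (f : bits n -> R) (x : bits n).
Hypothesis op_ge0 : forall y, 0 <= op x y.

Lemma p_plus_ge y : f x < f y -> op x y <= p_plus op f x.
Proof. by move=> fxy; rewrite /p_plus (bigD1 y) //= lerDl sumr_ge0. Qed.

Lemma p_minus_le_stay : \sum_y op x y = 1 -> p_minus op f x <= 1 - op x x.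
Proof.
rewrite (bigID (fun y => f y < f x)) /= => sum1.
have : op x x <= \sum_(y | ~~ (f y < f x)) op x y.
  by rewrite (bigD1 x) ?ltxx //= lerDl sumr_ge0.
rewrite /p_minus; lra.
Qed.
End Kernel.

Lemma not_optimal_better (R : realType) n (f : bits n -> R) x :
  ~ optimal f x -> exists y, f x < f y.
Proof.
move=> nopt; apply: contrapT => none; apply: nopt => y.
by rewrite leNgt; apply/negP => fxy; apply: none; exists y.
Qed.

Definition progress_bounds (R : realType) (op : forall n, bits n -> bits n -> R) :=
  (exists gamma : R, 1 < gamma /\
     exists N : nat, forall n : nat, (N <= n)%N ->
       forall (f : bits n -> R) (x : bits n), ~ optimal f x ->
         p_minus (op n) f x <= gamma^-1)
  /\
  (exists (C : R) (N : nat), forall n : nat, (N <= n)%N ->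
       forall (f : bits n -> R) (x : bits n), ~ optimal f x ->
         n%:R `^ (- (C * n%:R)) <= p_plus (op n) f x).

Lemma kernel_progress_bounds (R : realType) (op : forall n, bits n -> bits n -> R)
    (N : nat) (c C : R) :
  0 < c ->
  (forall n, (N <= n)%N -> forall x, \sum_y op n x y = 1) ->
  (forall n, (N <= n)%N -> forall x, c <= op n x x) ->
  (forall n, (N <= n)%N -> forall x y, n%:R `^ (- (C * n%:R)) <= op n x y) ->
  progress_bounds op.
Proof.
move=> c_gt0 op_sum1 stay_ge op_ge.
have op_ge0 n : (N <= n)%N -> forall x y, 0 <= op n x y.
  by move=> Nn x y; apply: le_trans (op_ge n Nn x y); exact: powR_ge0.
split.
  pose c' := Num.min c 2^-1.
  have c'_gt0 : 0 < c' by rewrite /c' lt_min c_gt0 invr_gt0 ltr0n.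
  have [c'_le_c c'_le_half] : c' <= c /\ c' <= 2^-1 by rewrite /c' !ge_min !lexx orbT.
  exists (1 - c')^-1; split; first by rewrite invf_gt1; lra.
  exists N => n Nn f x _; rewrite invrK.
  have := p_minus_le_stay f (op_ge0 n Nn x) (op_sum1 n Nn x).
  by have := stay_ge n Nn x; lra.
exists C, N => n Nn f x /not_optimal_better[y fxy].
by apply: le_trans (op_ge n Nn x y) _; apply: p_plus_ge; first exact: op_ge0.
Qed.

Lemma expR_le_1B (R : realType) (p : R) : 0 <= p <= 2^-1 ->
  expR (- (2 * p)) <= 1 - p.
Proof.
move=> /andP[p_ge0 p_le_half].
rewrite expRN -[leLHS]mul1r ler_pdivrMr ?expR_gt0 //.
have one_Bp_ge0 : 0 <= 1 - p by lra.
by apply: le_trans (ler_wpM2l one_Bp_ge0 (expR_ge1Dx (2 * p))); nra.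
Qed.

Section StandardBitMutation.
Variables (R : realType) (n : nat).
Implicit Types (p m : R) (x y : bits n).

Lemma sbm_sum1 p x : \sum_y sbm p x y = 1.
Proof.
rewrite /sbm -(bigA_distr_bigA (fun i b => if x i != b then p else 1 - p)).
by apply: big1 => i _; rewrite big_bool /=; case: (x i) => /=; ring.
Qed.

Lemma sbm_ge0 p x y : 0 <= p <= 1 -> 0 <= sbm p x y.
Proof. by move=> /andP[? ?]; apply: prodr_ge0 => i _; case: ifP => _; lra. Qed.

Lemma sbm_ge_expn p m x y : 0 <= m -> m <= p -> m <= 1 - p -> m ^+ n <= sbm p x y.
Proof.
move=> m_ge0 m_le_p m_le_1Bp; rewrite /sbm -[n in m ^+ n]card_ord -prodr_const.
by apply: ler_prod => i _; rewrite m_ge0; case: ifP.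
Qed.

Lemma sbm_stay_ge p x : 0 <= p <= 2^-1 -> expR (- (2 * (p * n%:R))) <= sbm p x x.
Proof.
move=> p_small; rewrite /sbm (eq_bigr (fun _ => 1 - p)) => [|i _]; last by rewrite eqxx.
rewrite prodr_const card_ord mulrA -mulNr expRM_natr lerXn2r ?nnegrE ?expR_ge0 //.
  by move: p_small => /andP[_]; lra.
exact: expR_le_1B.
Qed.
End StandardBitMutation.

Lemma sbm_progress_bounds (R : realType) (p : nat -> R) (C D : R) (N1 N2 : nat) :
  (forall n, 0 <= p n <= 1) ->
  (forall n, (N1 <= n)%N -> p n <= C / n%:R) ->
  (forall n, (N2 <= n)%N -> n%:R `^ (- D) <= p n) ->
  progress_bounds (fun n => @sbm R (p n) n).
Proof.
move=> p01 p_le p_ge.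
pose N3 := (Num.truncn (2 * C)).+1.
have C_lt_N3 : 2 * C < N3%:R by exact: Num.Theory.truncnS_gt.
pose N := maxn (maxn N1 N2) N3.+1.
have p_small n : (N <= n)%N -> p n * n%:R <= C /\ p n <= 2^-1.
  move=> Nn; have n_gt0 : (0 : R) < n%:R by rewrite ltr0n; lia.
  have pn_le : p n * n%:R <= C by rewrite -ler_pdivlMr // p_le //; lia.
  have : N3%:R <= n%:R :> R by rewrite ler_nat; lia.
  by have := p01 n; split => //; nra.
apply: (@kernel_progress_bounds _ _ N (expR (- (2 * C))) D) => [||n Nn x|n Nn x y].
- exact: expR_gt0.
- by move=> n _ x; exact: sbm_sum1.
- have [pn_le p_le_half] := p_small n Nn.
  apply: le_trans (sbm_stay_ge _ _); last by have := p01 n; lra.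
  by rewrite ler_expR; lra.
- have [_ p_le_half] := p_small n Nn.
  have pD_le : n%:R `^ (- D) <= p n by apply: p_ge; lia.
  rewrite -mulNr powRrM powR_mulrn ?powR_ge0 //.
  by apply: sbm_ge_expn; rewrite ?powR_ge0 //; lra.
Qed.

Lemma ler_powRN (R : realType) (r a b : R) : 0 <= r -> 0 < a -> a <= b ->
  b `^ (- r) <= a `^ (- r).
Proof.
move=> r_ge0 a_gt0 a_le_b; have b_gt0 := lt_le_trans a_gt0 a_le_b.
rewrite !powRN lef_pV2 ?posrE ?powR_gt0 //.
by apply: ge0_ler_powR; rewrite // nnegrE ltW.
Qed.

Definition dyadic_ratio (R : realType) (beta : R) : R := 2 `^ (1 - beta).

Section HeavyTailedNormaliser.
Variables (R : realType) (beta : R).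
Local Notation q := (dyadic_ratio beta).

Lemma dyadic_ratio_gt0 : 0 < q.
Proof. exact: powR_gt0. Qed.

Lemma dyadic_ratio_lt1 : 1 < beta -> q < 1.
Proof.
move=> beta_gt1; rewrite /dyadic_ratio /powR /= ifF ?pnatr_eq0 //.
by rewrite expR_lt1 pmulr_llt0 ?subr_lt0 // ln_gt0 ?ltr1n.
Qed.

Lemma dyadic_ratio_expn k : (2 ^ k)%:R * (2 ^ k)%:R `^ (- beta) = q ^+ k.
Proof.
rewrite /dyadic_ratio natrX -!powR_mulrn // -powRrM -powRD ?pnatr_eq0 ?implybT //.
by rewrite -powRrM; congr (_ `^ _); ring.
Qed.

Lemma dyadic_block_le k : 0 <= beta ->
  \sum_(2 ^ k <= j < 2 ^ k.+1) j%:R `^ (- beta) <= q ^+ k.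
Proof.
move=> beta_ge0; rewrite -dyadic_ratio_expn.
apply: (@le_trans _ _ (\sum_(2 ^ k <= j < 2 ^ k.+1) (2 ^ k)%:R `^ (- beta))).
  rewrite !big_nat; apply: ler_sum => j /andP[k_le_j _].
  by apply: ler_powRN; rewrite ?ler_nat ?ltr0n ?expn_gt0.
by rewrite sumr_const_nat expnS mul2n -addnn addnK mulr_natl.
Qed.

Lemma partial_sum_le_geometric k : 0 <= beta ->
  \sum_(1 <= j < 2 ^ k) j%:R `^ (- beta) <= \sum_(i < k) q ^+ i.
Proof.
move=> beta_ge0; elim: k => [|k IH]; first by rewrite big_geq // big_ord0.
rewrite big_ord_recr (@big_cat_nat _ _ _ (2 ^ k)) ?expn_gt0 ?leq_exp2l //=.
exact: lerD IH (dyadic_block_le k beta_ge0).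
Qed.

Lemma ht_norm_le_geometric n : 1 < beta -> ht_norm beta n <= (1 - q)^-1.
Proof.
move=> beta_gt1; have beta_ge0 : 0 <= beta by lra.
pose k := (n./2).+1; have k_le : (k <= 2 ^ k)%N by exact: ltnW (ltn_expl _ _).
rewrite /ht_norm; apply: (@le_trans _ _ (\sum_(1 <= j < 2 ^ k) j%:R `^ (- beta))).
  rewrite (@big_cat_nat _ _ _ k 1 (2 ^ k)) //= lerDl.
  by apply: sumr_ge0 => j _; exact: powR_ge0.
apply: le_trans (partial_sum_le_geometric k beta_ge0) _.
have := @geometric_le_lim R k 1 q ler01 dyadic_ratio_gt0.
rewrite ger0_norm ?(ltW dyadic_ratio_gt0) // dyadic_ratio_lt1 // mul1r => /(_ isT).
by rewrite /series /= big_mkord (eq_bigr (fun i : 'I_k => q ^+ i)) // => i _; rewrite mul1r.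
Qed.
End HeavyTailedNormaliser.

Section HeavyTailed.
Variables (R : realType) (beta : R) (n : nat).
Hypothesis n_ge2 : (2 <= n)%N.
Implicit Types x y : bits n.

Lemma ht_norm_ge1 : 1 <= ht_norm beta n.
Proof.
rewrite /ht_norm big_ltn ?ltnS ?half_gt0 // powR1 lerDl.
by apply: sumr_ge0 => j _; exact: powR_ge0.
Qed.

Lemma ht_norm_gt0 : 0 < ht_norm beta n.
Proof. exact: lt_le_trans ltr01 ht_norm_ge1. Qed.

Lemma ht_norm_le_n : 0 <= beta -> ht_norm beta n <= n%:R.
Proof.
move=> beta_ge0; apply: (@le_trans _ _ (\sum_(1 <= j < (n./2).+1) (1 : R))).
  rewrite /ht_norm !big_nat; apply: ler_sum => j /andP[j_ge1 _].
  by rewrite -[leRHS](powRr0 j%:R); apply: ler_powR; rewrite ?ler1n //; lra.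
by rewrite sumr_const_nat ler_nat; lia.
Qed.

Lemma ht_rate_ge0_le1 i : (i <= n./2)%N -> 0 <= (i%:R / n%:R : R) <= 1.
Proof.
move=> i_le; rewrite divr_ge0 //= ler_pdivrMr ?ltr0n ?mul1r ?ler_nat //; lia.
Qed.

Lemma invn_ge0_le_half : 0 <= (n%:R^-1 : R) <= 2^-1.
Proof.
have n_gt0 : (0 : R) < n%:R by rewrite ltr0n; lia.
by apply/andP; split; [rewrite invr_ge0 ltW | rewrite lef_pV2 ?posrE ?ler_nat].
Qed.

Lemma heavy_sum1 x : \sum_y heavy beta x y = 1.
Proof.
rewrite /heavy exchange_big /=.
under eq_bigr do rewrite -mulr_sumr sbm_sum1 mulr1.
by rewrite /ht_weight -mulr_suml divff // gt_eqF // ht_norm_gt0.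
Qed.

Lemma heavy_ge_sbm x y :
  (ht_norm beta n)^-1 * sbm n%:R^-1 x y <= heavy beta x y.
Proof.
rewrite /heavy big_ltn ?ltnS ?half_gt0 // /ht_weight powR1 !mul1r lerDl big_nat.
apply: sumr_ge0 => i /andP[_ i_le]; apply: mulr_ge0.
  by rewrite divr_ge0 ?powR_ge0 // ltW // ht_norm_gt0.
by apply: sbm_ge0; apply: ht_rate_ge0_le1; rewrite -ltnS.
Qed.

Lemma heavy_stay_ge x : 1 < beta ->
  expR (-2) * (1 - dyadic_ratio beta) <= heavy beta x x.
Proof.
move=> beta_gt1; have q_lt1 := dyadic_ratio_lt1 beta_gt1.
have n_gt0 : (0 : R) < n%:R by rewrite ltr0n; lia.
apply: le_trans (heavy_ge_sbm x x); rewrite mulrC.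
apply: ler_pM; [by rewrite subr_ge0 ltW | exact: expR_ge0 | |].
  rewrite -[leLHS]invrK lef_pV2 ?posrE ?invr_gt0 ?subr_gt0 ?ht_norm_gt0 //.
  exact: ht_norm_le_geometric.
apply: le_trans (sbm_stay_ge _ _); first by rewrite mulVf ?gt_eqF // mulr1.
exact: invn_ge0_le_half.
Qed.

Lemma heavy_ge x y : 0 <= beta -> n%:R `^ (- (2 * n%:R)) <= heavy beta x y.
Proof.
move=> beta_ge0; apply: le_trans (heavy_ge_sbm x y).
have n_gt0 : (0 : R) < n%:R by rewrite ltr0n; lia.
have /andP[inv_n_ge0 inv_n_le_half] := invn_ge0_le_half.
apply: (@le_trans _ _ (n%:R^-1 * n%:R^-1 ^+ n)).
  rewrite -exprS -natrM powR_invn // -exprVn.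
  by apply: ler_wiXn2l; rewrite ?invf_le1 ?ler1n //; lia.
apply: ler_pM; rewrite ?exprn_ge0 //.
  by rewrite lef_pV2 ?posrE ?ht_norm_gt0 ?ht_norm_le_n.
by apply: sbm_ge_expn; lra.
Qed.
End HeavyTailed.

Lemma heavy_progress_bounds (R : realType) (beta : R) :
  1 < beta -> progress_bounds (fun n => @heavy R beta n).
Proof.
move=> beta_gt1; have beta_ge0 : 0 <= beta by lra.
apply: (@kernel_progress_bounds _ _ 2 (expR (-2) * (1 - dyadic_ratio beta)) 2).
- by rewrite mulr_gt0 ?expR_gt0 // subr_gt0 dyadic_ratio_lt1.
- by move=> n n_ge2 x; exact: heavy_sum1.
- by move=> n n_ge2 x; exact: heavy_stay_ge.
- by move=> n n_ge2 x y; exact: heavy_ge.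
Qed.

Theorem lemma2p3 (R : realType) (op : forall n : nat, bits n -> bits n -> R) :
  ((exists p : nat -> R,
      (forall n, 0 <= p n <= 1) /\
      (exists (C : R) (N : nat), forall n : nat, (N <= n)%N -> p n <= C / n%:R) /\
      (exists (D : R) (N : nat), forall n : nat, (N <= n)%N -> n%:R `^ (- D) <= p n) /\
      (forall n, op n = sbm (p n) (n:=n)))
   \/
   (exists beta : R, 1 < beta /\ forall n, op n = heavy beta (n:=n))) ->
  (exists gamma : R, 1 < gamma /\
     exists N : nat, forall n : nat, (N <= n)%N ->
       forall (f : bits n -> R) (x : bits n), ~ optimal f x ->
         p_minus (op n) f x <= gamma^-1)
  /\
  (exists (C : R) (N : nat), forall n : nat, (N <= n)%N ->
       forall (f : bits n -> R) (x : bits n), ~ optimal f x ->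
         n%:R `^ (- (C * n%:R)) <= p_plus (op n) f x).
Proof.
move=> op_cases; change (progress_bounds op).
case: op_cases => [[p [p01 [[C [N1 p_le]] [[D [N2 p_ge]] op_sbm]]]] | [beta [beta_gt1 op_heavy]]].
- rewrite (functional_extensionality_dep op_sbm).
  exact: sbm_progress_bounds p01 p_le p_ge.
- rewrite (functional_extensionality_dep op_heavy).
  exact: heavy_progress_bounds.
Qed.
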